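(* Let $\widetilde G=(\widetilde N,\widetilde E)$ be a directed graph in which every edge $(\tilde n_1,\tilde n_2)\in\widetilde E$ carries a delay $\widetilde D_{\tilde n_1,\tilde n_2}\ge 0$ and a reliability $\widetilde\eta_{\tilde n_1,\tilde n_2}\in(0,1]$. Let $D(s)>0$ be a target delay, $H(s)\in(0,1)$ a target reliability, and $\gamma$ a positive integer. Assign to each edge the weight $$\tilde w(\tilde n_1,\tilde n_2)=\Big(\tilde w_0,\tilde w_1\Big)=\left(\frac{\widetilde D_{\tilde n_1,\tilde n_2}}{D(s)},\ \frac{\log\widetilde\eta_{\tilde n_1,\tilde n_2}}{\log H(s)}\right).$$ Define the expanded graph as follows: its vertices are $\tilde n^{i,j}$ for every $\tilde n\in\widetilde N$ and all integers $0\le i,j\le\gamma$; for every edge $(\tilde n_1,\tilde n_2)\in\widetilde E$ (among those retained, e.g. those with sufficient capacity) and every $i,j$, there is an (unweighted) directed edge from $\tilde n_1^{i,j}$ to $\tilde n_2^{\,i+\lceil\gamma\tilde w_0(\tilde n_1,\tilde n_2)\rceil,\ j+\lceil\gamma \tilde w_1(\tilde n_1,\tilde n_2)\rceil}$ whenever both superscripts are at most $\gamma$ (otherwise no edge is created). Then for any path in the expanded graph starting at a vertex of the form $e^{0,0}$, the corresponding path $e=\tilde n_0,\tilde n_1,\dots,\tilde n_m$ in $\widetilde G$ satisfies $$\sum_{k=1}^{m}\widetilde D_{\tilde n_{k-1},\tilde n_k}\le D(s)\quad\text{and}\quad\prod_{k=1}^{m}\widetilde\eta_{\tilde n_{k-1},\tilde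 n_k}\ge H(s),$$ i.e. it honors the additive KPI targets (network delay and reliability).
   Context: In the paper's network-slicing setting, $\widetilde G$ is the ''decision graph'': its vertices are service endpoints and computation-capable nodes (with replicas), and an edge $(\tilde n_1,\tilde n_2)$ represents deploying a virtual network function at $\tilde n_1$ and the next one at $\tilde n_2$, connected via a virtual link whose delay is the sum of the delays and whose reliability is the product of the reliabilities of the physical links and nodes composing it. The vertex $e^{0,0}$ is the copy of an endpoint $e$ with both superscripts equal to zero. *)

From mathcomp Require Import all_boot all_order all_algebra.
From mathcomp Require Import all_classical all_reals all_analysis.
Set Implicit Arguments. Unset Strict Implicit. Unset Printing Implicit Defensive.
Import Order.TTheory GRing.Theory Num.Theory.
Local Open Scope ring_scope.

Section Expanded.
Variables (R : realType) (N : Type).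
Variables (E : N -> N -> Prop) (Dl eta : N -> N -> R).
Variables (Ds Hs : R) (gamma : nat).

Definition w0 (x y : N) : R := Dl x y / Ds.
Definition w1 (x y : N) : R := ln (eta x y) / ln Hs.

(* expanded vertex n^{i,j} is (n, i, j) with 0 <= i, j <= gamma *)
Definition xvertex (v : N * nat * nat) : Prop :=
  (v.1.2 <= gamma)%N /\ (v.2 <= gamma)%N.

Definition xedge (v1 v2 : N * nat * nat) : Prop :=
  let: (n1, i1, j1) := v1 in
  let: (n2, i2, j2) := v2 in
  [/\ E n1 n2, xvertex (n1, i1, j1), xvertex (n2, i2, j2),
      (i2 : int) = (i1 : int) + Num.ceil (gamma%:R * w0 n1 n2)
    & (j2 : int) = (j1 : int) + Num.ceil (gamma%:R * w1 n1 n2)].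

Fixpoint xpath (v : N * nat * nat) (s : seq (N * nat * nat)) : Prop :=
  match s with
  | [::] => True
  | w :: s' => xedge v w /\ xpath w s'
  end.
End Expanded.

Fixpoint path_delay (R : realType) (N : Type) (Dl : N -> N -> R)
    (x : N) (s : seq N) : R :=
  match s with
  | [::] => 0
  | y :: s' => Dl x y + path_delay Dl y s'
  end.

Fixpoint path_rel (R : realType) (N : Type) (eta : N -> N -> R)
    (x : N) (s : seq N) : R :=
  match s with
  | [::] => 1
  | y :: s' => eta x y * path_rel eta y s'
  end.

(** Along an edge of the expanded graph each superscript grows by the ceiling
    of [gamma] times the corresponding weight, hence by at least [gamma] times
    that weight.  A path starting at [e^{0,0}] therefore accumulates weights
    whose sums, multiplied by [gamma], never exceed the final superscripts,
    which are at most [gamma].  The sum of the [w0] is the total delay divided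
    by [D(s)], and the sum of the [w1] is [log] of the total reliability divided
    by [log H(s) < 0]; so both sums being at most [1] is exactly the claim. *)
From mathcomp Require Import all_boot all_order all_algebra.
From mathcomp Require Import all_classical all_reals all_analysis.
Set Implicit Arguments. Unset Strict Implicit. Unset Printing Implicit Defensive.
Import Order.TTheory GRing.Theory Num.Theory.
Local Open Scope ring_scope.

Section PathWeights.
Variables (R : realType) (N : Type).

Lemma path_delay_divr (f : N -> N -> R) (a : R) (x : N) (s : seq N) :
  path_delay (fun y z => f y z / a) x s = path_delay f x s / a.
Proof. by elim: s x => [|y s IHs] x /=; rewrite ?mul0r // IHs mulrDl. Qed.

Variable eta : N -> N -> R.

Lemma path_rel_gt0 (x : N) (s : seq N) :
  path (fun y z => 0 < eta y z) x s -> 0 < path_rel eta x s.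
Proof.
by elim: s x => [|y s IHs] x //= /andP[eta_gt0 /IHs rel_gt0]; rewrite mulr_gt0.
Qed.

Lemma ln_path_rel (x : N) (s : seq N) :
  path (fun y z => 0 < eta y z) x s ->
  ln (path_rel eta x s) = path_delay (fun y z => ln (eta y z)) x s.
Proof.
elim: s x => [|y s IHs] x /=; first by rewrite ln1.
move=> /andP[eta_gt0 pos_s].
by rewrite lnM ?posrE ?path_rel_gt0 // IHs.
Qed.

End PathWeights.

Lemma ceil_step_lower (R : realType) (x : R) (k1 k2 : nat) :
  (k2 : int) = (k1 : int) + Num.ceil x -> k1%:R + x <= k2%:R :> R.
Proof.
move=> def_k2; have -> : k2%:R = (k2 : int)%:~R :> R by [].
by rewrite def_k2 rmorphD lerD2l ceil_ge.
Qed.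

Section ExpandedPaths.
Variables (R : realType) (N : Type) (E : N -> N -> Prop) (Dl eta : N -> N -> R).
Variables (Ds Hs : R) (gamma : nat).

Local Notation xpath := (xpath E Dl eta Ds Hs gamma).
Local Notation nodes s := [seq v.1.1 | v <- s].

Lemma xpath_path (P : rel N) (v : N * nat * nat) (s : seq (N * nat * nat)) :
  (forall x y, E x y -> P x y) -> xpath v s -> path P v.1.1 (nodes s).
Proof.
move=> EP; elim: s v => [|[[y i2] j2] s IHs] [[x i1] j1] //=.
by move=> [[Exy _ _ _ _] /IHs]; rewrite EP.
Qed.

Lemma xpath_weight_bound (x : N) (i j : nat) (s : seq (N * nat * nat)) :
  xvertex gamma (x, i, j) -> xpath (x, i, j) s ->
  i%:R + gamma%:R * path_delay (w0 Dl Ds) x (nodes s) <= gamma%:R /\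
  j%:R + gamma%:R * path_delay (w1 eta Hs) x (nodes s) <= gamma%:R.
Proof.
elim: s x i j => [|[[y i2] j2] s IHs] x i j [/= i_le j_le].
  by rewrite !mulr0 !addr0 !ler_nat.
move=> [[_ _ vy def_i2 def_j2] /(IHs _ _ _ vy) [bound_i2 bound_j2]] /=.
rewrite !mulrDr !addrA; split.
- by apply: le_trans bound_i2; rewrite lerD2r ceil_step_lower.
- by apply: le_trans bound_j2; rewrite lerD2r ceil_step_lower.
Qed.

End ExpandedPaths.

Theorem lemma1 (R : realType) (N : Type) (E : N -> N -> Prop)
    (Dl eta : N -> N -> R) (Ds Hs : R) (gamma : nat)
    (hD : forall x y, E x y -> 0 <= Dl x y)
    (heta : forall x y, E x y -> 0 < eta x y <= 1)
    (hDs : 0 < Ds) (hHs : 0 < Hs < 1) (hgamma : (0 < gamma)%N)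
    (e : N) (s : seq (N * nat * nat)) :
  xpath E Dl eta Ds Hs gamma (e, 0%N, 0%N) s ->
  path_delay Dl e [seq v.1.1 | v <- s] <= Ds /\
  Hs <= path_rel eta e [seq v.1.1 | v <- s].
Proof.
move=> xp; have /andP[Hs_gt0 Hs_lt1] := hHs.
have gamma_gt0 : 0 < gamma%:R :> R by rewrite ltr0n.
have lnHs_lt0 : ln Hs < 0 by rewrite ln_lt0 // Hs_gt0.
have eta_pos : path (fun x y => 0 < eta x y) e [seq v.1.1 | v <- s].
  by apply: xpath_path xp => x y /heta /andP[].
have [delay_idx rel_idx] :=
  xpath_weight_bound (conj (leq0n gamma) (leq0n gamma)) xp.
have le1 (x : R) : 0%:R + gamma%:R * x <= gamma%:R -> x <= 1.
  by rewrite add0r -[X in _ <= X]mulr1 ler_pM2l.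
split.
- move: (le1 _ delay_idx).
  by rewrite path_delay_divr ler_pdivrMr // mul1r.
- move: (le1 _ rel_idx).
  rewrite path_delay_divr -ln_path_rel // ler_ndivrMr // mul1r.
  by rewrite ler_ln ?posrE ?path_rel_gt0.
Qed.
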